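(* With the notation below, the map $\psi\colon L_{\mathbb{R}}\to\mathbb{Z}^6$ defined by $\psi(\iota_{\mathbb{R}}(\bm q))=\lceil(\gamma(\bm q),-\gamma(\bm q))\rceil$ (componentwise ceiling) for all $\bm q\in\mathbb{R}^2$ is a compatible $\mathbb{Z}^6$-stratification of $L_{\mathbb{R}}$ with the cell structure described below.
   Context: Let $L\subseteq\mathbb{Z}^6$ be the lattice generated by $(1,-1,0,-1,1,0)$ and $(0,-1,1,0,1,-1)$ (the lattice of the diagonal embedding $\mathbb{P}^2\to\mathbb{P}^2\times\mathbb{P}^2$), $\iota\colon\mathbb{Z}^2\to L$ the isomorphism sending the standard basis to these generators, $\iota_{\mathbb{R}}\colon\mathbb{R}^2\to\mathbb{R}^6$ its linear extension, with image $L_{\mathbb{R}}=L\otimes\mathbb{R}$. Let $\mathcal S\subseteq\mathbb{R}^3$ (the staircase surface) be the closure of $\{\bm p\in\mathbb{R}^3:\lceil p_1\rceil+\lceil p_2\rceil+\lceil p_3\rceil=0$ and at least one $p_i\in\mathbb{Z}\}$, with the polyhedral cell structure given by its intersection with the periodic arrangement of hyperplanes $\{p_i=j\}$, $i=1,2,3$, $j\in\mathbb{Z}$ (maximal cells are unit squares). Define $\gamma\colon\mathbb{R}^2\to\mathcal S$ by sending $\bm q=(q_1,q_2)$ to $(q_1,-q_1-q_2,q_2)\in\mathbb{R}^3$ and then projecting onto $\mathcal S$ along the direction $(1,1,1)$ (i.e., $\gamma(\bm q)$ is the point of $\mathcal S$ on the line $(q_1,-q_1-q_2,q_2)+\mathbb{R}(1,1,1)$);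 $\gamma$ is a homeomorphism, and $\iota(\bm u)=(\gamma(\bm u),-\gamma(\bm u))$ for $\bm u\in\mathbb{Z}^2$. The cell structure on $L_{\mathbb{R}}$ is the one transported from $\mathcal S$ via the homeomorphism $\iota_{\mathbb{R}}\circ\gamma^{-1}$ (equivalently, projecting $\mathcal S$ along $(1,1,1)$); it is $L$-equivariant. Give $\mathbb{Z}^6$ the componentwise order and Alexandrov topology (open = up-closed). A compatible $\mathbb{Z}^6$-stratification is a continuous map $\psi\colon L_{\mathbb{R}}\to\mathbb{Z}^6$, constant on each open cell, with $\psi(\bm p+\bm v)=\psi(\bm p)+\bm v$ for all $\bm p\in L_{\mathbb{R}}$, $\bm v\in L$. *)

From Stdlib Require Import Reals ZArith ClassicalEpsilon.
Open Scope R_scope.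

Record V3 (A : Type) := mkV3 { x1 : A; x2 : A; x3 : A }.
Record V6 (A : Type) := mkV6 { e1 : A; e2 : A; e3 : A; e4 : A; e5 : A; e6 : A }.
Arguments mkV3 {A}. Arguments x1 {A}. Arguments x2 {A}. Arguments x3 {A}.
Arguments mkV6 {A}. Arguments e1 {A}. Arguments e2 {A}. Arguments e3 {A}.
Arguments e4 {A}. Arguments e5 {A}. Arguments e6 {A}.

(* ceiling of a real number: ceil x = - floor (- x), floor = Int_part *)
Definition ceilZ (x : R) : Z := (- Int_part (- x))%Z.

Definition isInt (x : R) : Prop := exists z : Z, x = IZR z.

(* ---------- Z^6 with componentwise order (Alexandrov topology: open = up-closed) *)
Definition leZ6 (x y : V6 Z) : Prop :=
  (e1 x <= e1 y)%Z /\ (e2 x <= e2 y)%Z /\ (e3 x <= e3 y)%Z /\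
  (e4 x <= e4 y)%Z /\ (e5 x <= e5 y)%Z /\ (e6 x <= e6 y)%Z.

Definition up_closed (U : V6 Z -> Prop) : Prop :=
  forall x y, U x -> leZ6 x y -> U y.

Definition addZ6 (x y : V6 Z) : V6 Z :=
  mkV6 (e1 x + e1 y)%Z (e2 x + e2 y)%Z (e3 x + e3 y)%Z
       (e4 x + e4 y)%Z (e5 x + e5 y)%Z (e6 x + e6 y)%Z.

Definition realZ6 (v : V6 Z) : V6 R :=
  mkV6 (IZR (e1 v)) (IZR (e2 v)) (IZR (e3 v)) (IZR (e4 v)) (IZR (e5 v)) (IZR (e6 v)).

Definition addR6 (x y : V6 R) : V6 R :=
  mkV6 (e1 x + e1 y) (e2 x + e2 y) (e3 x + e3 y)
       (e4 x + e4 y) (e5 x + e5 y) (e6 x + e6 y).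

(* sup-distance on R^6 (induces the Euclidean topology) *)
Definition dist6 (x y : V6 R) : R :=
  Rmax (Rmax (Rmax (Rabs (e1 x - e1 y)) (Rabs (e2 x - e2 y))) (Rabs (e3 x - e3 y)))
       (Rmax (Rmax (Rabs (e4 x - e4 y)) (Rabs (e5 x - e5 y))) (Rabs (e6 x - e6 y))).

Definition iotaZ (a b : Z) : V6 Z :=
  mkV6 a (- a - b)%Z b (- a)%Z (a + b)%Z (- b)%Z.
Definition inL (v : V6 Z) : Prop := exists a b : Z, v = iotaZ a b.

Definition iotaR (q1 q2 : R) : V6 R :=
  mkV6 q1 (- q1 - q2) q2 (- q1) (q1 + q2) (- q2).
Definition inLR (p : V6 R) : Prop := exists q1 q2 : R, p = iotaR q1 q2.

Definition open_in_LR (A : V6 R -> Prop) : Prop :=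
  forall p, A p -> inLR p ->
    exists eps, 0 < eps /\ forall p', inLR p' -> dist6 p p' < eps -> A p'.

Definition stair_pre (p : V3 R) : Prop :=
  (ceilZ (x1 p) + ceilZ (x2 p) + ceilZ (x3 p) = 0)%Z /\
  (isInt (x1 p) \/ isInt (x2 p) \/ isInt (x3 p)).

Definition closure3 (A : V3 R -> Prop) (p : V3 R) : Prop :=
  forall eps, 0 < eps -> exists a, A a /\
    Rabs (x1 a - x1 p) < eps /\ Rabs (x2 a - x2 p) < eps /\ Rabs (x3 a - x3 p) < eps.

Definition staircase (p : V3 R) : Prop := closure3 stair_pre p.

Definition gamma_t (q1 q2 : R) : R :=
  epsilon (inhabits 0%R)
    (fun t => staircase (mkV3 (q1 + t) (- q1 - q2 + t) (q2 + t))).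

Definition gamma (q1 q2 : R) : V3 R :=
  let t := gamma_t q1 q2 in mkV3 (q1 + t) (- q1 - q2 + t) (q2 + t).

(* open face of the periodic arrangement {p_i = j}: for each i, either
   p_i = a_i (fixed_i = true) or a_i < p_i < a_i + 1 (fixed_i = false) *)
Definition coord_face (a : Z) (fixed : bool) (x : R) : Prop :=
  if fixed then x = IZR a else IZR a < x < IZR a + 1.

Definition arr_face (a : V3 Z) (f : V3 bool) (p : V3 R) : Prop :=
  coord_face (x1 a) (x1 f) (x1 p) /\ coord_face (x2 a) (x2 f) (x2 p) /\
  coord_face (x3 a) (x3 f) (x3 p).

(* open cell of S: S ∩ (open face); transported to L_R via iota_R ∘ gamma^{-1} *)
Definition LR_open_cell (a : V3 Z) (f : V3 bool) (p : V6 R) : Prop :=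
  exists q1 q2, p = iotaR q1 q2 /\ staircase (gamma q1 q2) /\ arr_face a f (gamma q1 q2).

Definition compatible_stratification (psi : V6 R -> V6 Z) : Prop :=
  (forall U, up_closed U -> open_in_LR (fun p => U (psi p))) /\
  (forall a f p p', LR_open_cell a f p -> LR_open_cell a f p' -> psi p = psi p') /\
  (forall p v, inLR p -> inL v -> psi (addR6 p (realZ6 v)) = addZ6 (psi p) v).

From Stdlib Require Import Reals ZArith Lra Lia ClassicalEpsilon.
Open Scope R_scope.

(* The staircase surface is the set of points p with
   sum_i ceil p_i <= 0 < sum_i (floor p_i + 1), the boundary of the down-set
   {sum_i ceil p_i <= 0}: limits of points of S keep both inequalities because
   ceil is lower and floor upper semicontinuous, and conversely such a point is
   approximated by raising its integer coordinates slightly, one at a time, until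
   the ceiling sum reaches 0.  No two points p, p' of S satisfy p' >= p + c(1,1,1)
   with c > 0, since then floor p_i < ceil p'_i for each i, forcing
   sum_i (floor p_i + 1) <= sum_i ceil p'_i <= 0.  So each diagonal line
   p + R(1,1,1) meets S exactly once, at the supremum of
   {t | sum_i ceil (p_i + t) <= 0}, and that parameter moves by at most 2d
   when q moves by d.  Hence gamma is continuous, and psi, made of
   ceilings, can only increase near a point, which is continuity for the
   up-closed topology.  On an open cell all six ceilings are fixed by the face,
   and translating q by Z^2 translates the points of S by integer vectors of
   zero sum, which preserves S, so gamma shifts by that vector and psi by the
   corresponding element of L. *)

Ltac push_IZR :=
  repeat first [rewrite plus_IZR in * | rewrite minus_IZR in * | rewrite opp_IZR in *].

Lemma Int_part_bounds x : IZR (Int_part x) <= x < IZR (Int_part x) + 1.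
Proof. destruct (base_Int_part x). lra. Qed.

Lemma Int_part_unique x z : IZR z <= x < IZR z + 1 -> Int_part x = z.
Proof. intros. symmetry. apply Int_part_spec. lra. Qed.

Lemma ceilZ_opp x : ceilZ (- x) = (- Int_part x)%Z.
Proof. unfold ceilZ. now rewrite Ropp_involutive. Qed.

Lemma ceilZ_bounds x : IZR (ceilZ x) - 1 < x <= IZR (ceilZ x).
Proof. unfold ceilZ. rewrite opp_IZR. destruct (Int_part_bounds (- x)). lra. Qed.

Lemma ceilZ_unique x z : IZR z - 1 < x <= IZR z -> ceilZ x = z.
Proof.
  intros. unfold ceilZ. rewrite (Int_part_unique (- x) (- z)); [lia|].
  rewrite opp_IZR. lra.
Qed.

Lemma ceilZ_IZR n : ceilZ (IZR n) = n.
Proof. apply ceilZ_unique. lra. Qed.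

Lemma ceilZ_add_IZR x n : ceilZ (x + IZR n) = (ceilZ x + n)%Z.
Proof. apply ceilZ_unique. destruct (ceilZ_bounds x). push_IZR. lra. Qed.

Lemma Int_part_add_IZR x n : Int_part (x + IZR n) = (Int_part x + n)%Z.
Proof. apply Int_part_unique. destruct (Int_part_bounds x). push_IZR. lra. Qed.

Lemma ceilZ_le_IZR x z : x <= IZR z -> (ceilZ x <= z)%Z.
Proof.
  intros. destruct (ceilZ_bounds x).
  assert (ceilZ x < z + 1)%Z by (apply lt_IZR; push_IZR; lra). lia.
Qed.

Lemma ceilZ_le_of_lt x y : IZR (ceilZ x) - 1 < y -> (ceilZ x <= ceilZ y)%Z.
Proof.
  intros. destruct (ceilZ_bounds y).
  assert (ceilZ x < ceilZ y + 1)%Z by (apply lt_IZR; push_IZR; lra). lia.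
Qed.

Lemma Int_part_le_of_lt x y : y < IZR (Int_part x) + 1 -> (Int_part y <= Int_part x)%Z.
Proof.
  intros. destruct (Int_part_bounds y).
  assert (Int_part y < Int_part x + 1)%Z by (apply lt_IZR; push_IZR; lra). lia.
Qed.

Lemma Int_part_lt_ceilZ x y : x < y -> (Int_part x < ceilZ y)%Z.
Proof. intros. destruct (Int_part_bounds x), (ceilZ_bounds y). apply lt_IZR. lra. Qed.

Lemma ceilZ_Int_part_bounds x : (Int_part x <= ceilZ x <= Int_part x + 1)%Z.
Proof.
  destruct (Int_part_bounds x), (ceilZ_bounds x).
  split; [apply le_IZR; lra | apply ceilZ_le_IZR; push_IZR; lra].
Qed.

Lemma ceilZ_eq_Int_part_iff x : ceilZ x = Int_part x <-> isInt x.
Proof.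
  split.
  - intros E. exists (Int_part x).
    destruct (Int_part_bounds x), (ceilZ_bounds x). rewrite E in *. lra.
  - intros [n ->]. rewrite ceilZ_IZR. symmetry. apply Int_part_unique. lra.
Qed.

Lemma isInt_add_small x eta : isInt x -> 0 < eta < 1 ->
  ceilZ (x + eta) = (ceilZ x + 1)%Z /\ Int_part (x + eta) = Int_part x.
Proof.
  intros [n ->] Heta.
  rewrite ceilZ_IZR, (Int_part_unique (IZR n) n) by lra.
  split; [apply ceilZ_unique | apply Int_part_unique]; push_IZR; lra.
Qed.

Definition ceil_margin (x : R) : R :=
  Rmin (x + 1 - IZR (ceilZ x)) (IZR (Int_part x) + 1 - x).

Lemma ceil_margin_pos x : 0 < ceil_margin x.
Proof.
  destruct (Int_part_bounds x), (ceilZ_bounds x). apply Rmin_pos; lra.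
Qed.

Lemma ceil_margin_le x :
  ceil_margin x <= x + 1 - IZR (ceilZ x) /\ ceil_margin x <= IZR (Int_part x) + 1 - x.
Proof. split; [apply Rmin_l | apply Rmin_r]. Qed.

Lemma ceilZ_left x y : x - ceil_margin x < y <= x -> ceilZ y = ceilZ x.
Proof.
  intros. apply ceilZ_unique. destruct (ceil_margin_le x), (ceilZ_bounds x). lra.
Qed.

Lemma ceilZ_right x y : x < y < x + ceil_margin x -> ceilZ y = (Int_part x + 1)%Z.
Proof.
  intros. apply ceilZ_unique. destruct (ceil_margin_le x), (Int_part_bounds x).
  push_IZR. lra.
Qed.

Lemma ceilZ_Int_part_near x y : Rabs (y - x) < ceil_margin x ->
  (ceilZ x <= ceilZ y)%Z /\ (Int_part y <= Int_part x)%Z.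
Proof.
  intros H. apply Rabs_def2 in H. destruct (ceil_margin_le x).
  split; [apply ceilZ_le_of_lt | apply Int_part_le_of_lt]; lra.
Qed.

Definition near3 (eps : R) (a p : V3 R) : Prop :=
  Rabs (x1 a - x1 p) < eps /\ Rabs (x2 a - x2 p) < eps /\ Rabs (x3 a - x3 p) < eps.

Definition margin3 (p : V3 R) : R :=
  Rmin (Rmin (ceil_margin (x1 p)) (ceil_margin (x2 p))) (ceil_margin (x3 p)).

Lemma margin3_pos p : 0 < margin3 p.
Proof. apply Rmin_pos; [apply Rmin_pos|]; apply ceil_margin_pos. Qed.

Lemma margin3_le p : margin3 p <= ceil_margin (x1 p) /\
  margin3 p <= ceil_margin (x2 p) /\ margin3 p <= ceil_margin (x3 p).
Proof.
  unfold margin3.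
  pose proof (Rmin_l (Rmin (ceil_margin (x1 p)) (ceil_margin (x2 p))) (ceil_margin (x3 p))).
  pose proof (Rmin_r (Rmin (ceil_margin (x1 p)) (ceil_margin (x2 p))) (ceil_margin (x3 p))).
  pose proof (Rmin_l (ceil_margin (x1 p)) (ceil_margin (x2 p))).
  pose proof (Rmin_r (ceil_margin (x1 p)) (ceil_margin (x2 p))).
  lra.
Qed.

Lemma closure3_idem (A : V3 R -> Prop) p : closure3 (closure3 A) p -> closure3 A p.
Proof.
  intros H eps Heps.
  destruct (H (eps / 2)) as [a [Ha [Na1 [Na2 Na3]]]]; [lra|].
  destruct (Ha (eps / 2)) as [b [Hb [Nb1 [Nb2 Nb3]]]]; [lra|].
  exists b. split; [exact Hb|].
  apply Rabs_def2 in Na1, Na2, Na3, Nb1, Nb2, Nb3.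
  repeat split; apply Rabs_def1; lra.
Qed.

Definition ceil_sum (p : V3 R) : Z := (ceilZ (x1 p) + ceilZ (x2 p) + ceilZ (x3 p))%Z.
Definition floor_sum (p : V3 R) : Z := (Int_part (x1 p) + Int_part (x2 p) + Int_part (x3 p))%Z.

Definition on_stair (p : V3 R) : Prop := (ceil_sum p <= 0 < floor_sum p + 3)%Z.

Lemma on_stair_isInt p : on_stair p -> isInt (x1 p) \/ isInt (x2 p) \/ isInt (x3 p).
Proof.
  unfold on_stair, ceil_sum, floor_sum. intros.
  pose proof (ceilZ_Int_part_bounds (x1 p)).
  pose proof (ceilZ_Int_part_bounds (x2 p)).
  pose proof (ceilZ_Int_part_bounds (x3 p)).
  rewrite <- !ceilZ_eq_Int_part_iff. lia.
Qed.

Lemma stair_pre_on_stair p : stair_pre p -> on_stair p.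
Proof.
  unfold stair_pre, on_stair, ceil_sum, floor_sum. intros [Hsum Hint].
  pose proof (ceilZ_Int_part_bounds (x1 p)).
  pose proof (ceilZ_Int_part_bounds (x2 p)).
  pose proof (ceilZ_Int_part_bounds (x3 p)).
  rewrite <- !ceilZ_eq_Int_part_iff in Hint. lia.
Qed.

Lemma on_stair_closed p : closure3 on_stair p -> on_stair p.
Proof.
  intros Hcl.
  destruct (Hcl (margin3 p) (margin3_pos p)) as [a [Ha [N1 [N2 N3]]]].
  destruct (margin3_le p) as [M1 [M2 M3]].
  destruct (ceilZ_Int_part_near (x1 p) (x1 a)); [lra|].
  destruct (ceilZ_Int_part_near (x2 p) (x2 a)); [lra|].
  destruct (ceilZ_Int_part_near (x3 p) (x3 a)); [lra|].
  unfold on_stair, ceil_sum, floor_sum in *. lia.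
Qed.

Lemma on_stair_stair_pre p : on_stair p -> ceil_sum p = 0%Z -> stair_pre p.
Proof. intros Hp Hsum. split; [exact Hsum | exact (on_stair_isInt p Hp)]. Qed.

Lemma on_stair_raise p eps : on_stair p -> (ceil_sum p < 0)%Z -> 0 < eps ->
  exists p', on_stair p' /\ ceil_sum p' = (ceil_sum p + 1)%Z /\ near3 eps p' p.
Proof.
  intros Hp Hneg Heps.
  set (eta := Rmin (eps / 2) (1 / 2)).
  assert (Heta : 0 < eta < 1 /\ eta < eps).
  { unfold eta. pose proof (Rmin_l (eps / 2) (1 / 2)). pose proof (Rmin_r (eps / 2) (1 / 2)).
    pose proof (Rmin_pos (eps / 2) (1 / 2) ltac:(lra) ltac:(lra)). lra. }
  destruct p as [y1 y2 y3].
  pose proof (on_stair_isInt _ Hp) as Hint.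
  unfold on_stair, ceil_sum, floor_sum, near3 in *; cbn [x1 x2 x3] in *.
  destruct Hint as [I|[I|I]];
    destruct (isInt_add_small _ eta I) as [Hc Hf]; try lra;
    [exists (mkV3 (y1 + eta) y2 y3) | exists (mkV3 y1 (y2 + eta) y3)
    | exists (mkV3 y1 y2 (y3 + eta))];
    cbn [x1 x2 x3]; rewrite Hc, Hf;
    (split; [lia | split; [lia | repeat split; apply Rabs_def1; lra]]).
Qed.

Lemma on_stair_staircase p : on_stair p -> staircase p.
Proof.
  intros Hp. remember (Z.to_nat (- ceil_sum p)) as k eqn:Ek.
  revert p Hp Ek. induction k as [|k IH]; intros p Hp Ek.
  - intros eps Heps. exists p. split.
    + apply on_stair_stair_pre; [exact Hp | unfold on_stair in Hp; lia].
    + rewrite !Rminus_diag, Rabs_R0. lra.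
  - apply closure3_idem. intros eps Heps.
    destruct (on_stair_raise p eps Hp) as [p' [Hp' [Hsum Hnear]]];
      [unfold on_stair in Hp; lia | exact Heps |].
    exists p'. split; [apply IH; [exact Hp' | lia] | exact Hnear].
Qed.

Lemma staircase_iff_on_stair p : staircase p <-> on_stair p.
Proof.
  split; [|apply on_stair_staircase].
  intros Hp. apply on_stair_closed. intros eps Heps.
  destruct (Hp eps Heps) as [a [Ha Hnear]].
  exists a. split; [apply stair_pre_on_stair, Ha | exact Hnear].
Qed.

Lemma on_stair_antichain p p' c : on_stair p -> on_stair p' ->
  x1 p + c <= x1 p' -> x2 p + c <= x2 p' -> x3 p + c <= x3 p' -> c <= 0.
Proof.
  intros Hp Hp' H1 H2 H3. destruct (Rle_lt_dec c 0) as [|Hc]; [assumption | exfalso].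
  pose proof (Int_part_lt_ceilZ (x1 p) (x1 p') ltac:(lra)).
  pose proof (Int_part_lt_ceilZ (x2 p) (x2 p') ltac:(lra)).
  pose proof (Int_part_lt_ceilZ (x3 p) (x3 p') ltac:(lra)).
  unfold on_stair, ceil_sum, floor_sum in *. lia.
Qed.

Lemma on_stair_translate p p' n1 n2 n3 : (n1 + n2 + n3 = 0)%Z ->
  x1 p' = x1 p + IZR n1 -> x2 p' = x2 p + IZR n2 -> x3 p' = x3 p + IZR n3 ->
  on_stair p -> on_stair p'.
Proof.
  intros Hn H1 H2 H3. unfold on_stair, ceil_sum, floor_sum.
  rewrite H1, H2, H3, !ceilZ_add_IZR, !Int_part_add_IZR. lia.
Qed.

Definition shift3 (b : V3 R) (t : R) : V3 R := mkV3 (x1 b + t) (x2 b + t) (x3 b + t).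

Lemma ceil_sum_shift3_left b t s : t - margin3 (shift3 b t) < s <= t ->
  ceil_sum (shift3 b s) = ceil_sum (shift3 b t).
Proof.
  intros Hs. destruct (margin3_le (shift3 b t)) as [M1 [M2 M3]].
  unfold ceil_sum, shift3 in *; cbn [x1 x2 x3] in *.
  rewrite (ceilZ_left (x1 b + t) (x1 b + s)), (ceilZ_left (x2 b + t) (x2 b + s)),
    (ceilZ_left (x3 b + t) (x3 b + s)); [reflexivity | lra ..].
Qed.

Lemma ceil_sum_shift3_right b t s : t < s < t + margin3 (shift3 b t) ->
  ceil_sum (shift3 b s) = (floor_sum (shift3 b t) + 3)%Z.
Proof.
  intros Hs. destruct (margin3_le (shift3 b t)) as [M1 [M2 M3]].
  unfold ceil_sum, floor_sum, shift3 in *; cbn [x1 x2 x3] in *.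
  rewrite (ceilZ_right (x1 b + t) (x1 b + s)), (ceilZ_right (x2 b + t) (x2 b + s)),
    (ceilZ_right (x3 b + t) (x3 b + s)); [lia | lra ..].
Qed.

Lemma exists_on_stair_shift3 b : exists t, on_stair (shift3 b t).
Proof.
  set (E t := (ceil_sum (shift3 b t) <= 0)%Z).
  assert (E_bound : bound E).
  { exists (- (x1 b + x2 b + x3 b) / 3). intros t Et.
    unfold E, ceil_sum, shift3 in Et; cbn [x1 x2 x3] in Et. apply IZR_le in Et. push_IZR.
    destruct (ceilZ_bounds (x1 b + t)), (ceilZ_bounds (x2 b + t)), (ceilZ_bounds (x3 b + t)).
    lra. }
  assert (E_inhabited : exists t, E t).
  { set (t0 := - (Rabs (x1 b) + Rabs (x2 b) + Rabs (x3 b)) - 1). exists t0.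
    pose proof (Rle_abs (x1 b)). pose proof (Rle_abs (x2 b)). pose proof (Rle_abs (x3 b)).
    pose proof (Rabs_pos (x1 b)). pose proof (Rabs_pos (x2 b)). pose proof (Rabs_pos (x3 b)).
    unfold E, ceil_sum, shift3; cbn [x1 x2 x3].
    pose proof (ceilZ_le_IZR (x1 b + t0) 0 ltac:(unfold t0; lra)).
    pose proof (ceilZ_le_IZR (x2 b + t0) 0 ltac:(unfold t0; lra)).
    pose proof (ceilZ_le_IZR (x3 b + t0) 0 ltac:(unfold t0; lra)).
    lia. }
  destruct (completeness E E_bound E_inhabited) as [t [t_ub t_least]].
  exists t. pose proof (margin3_pos (shift3 b t)) as d_pos.
  set (d := margin3 (shift3 b t)) in *.
  split.
  - destruct (Z_le_gt_dec (ceil_sum (shift3 b t)) 0) as [|Hpos]; [assumption | exfalso].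
    assert (t <= t - d); [|lra].
    apply t_least. intros s Es. destruct (Rle_lt_dec s (t - d)) as [|Hs]; [assumption | exfalso].
    pose proof (t_ub s Es). unfold E in Es. rewrite (ceil_sum_shift3_left b t s) in Es by (fold d; lra). lia.
  - assert (Hout : ~ E (t + d / 2)) by (intros Es; pose proof (t_ub _ Es); lra).
    unfold E in Hout. rewrite (ceil_sum_shift3_right b t) in Hout by (fold d; lra). lia.
Qed.

Lemma gamma_on_stair q1 q2 : on_stair (gamma q1 q2).
Proof.
  apply staircase_iff_on_stair. unfold gamma, gamma_t. cbv zeta.
  apply (epsilon_spec _ (fun t => staircase (mkV3 (q1 + t) (- q1 - q2 + t) (q2 + t)))).
  destruct (exists_on_stair_shift3 (mkV3 q1 (- q1 - q2) q2)) as [t Ht].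
  exists t. apply staircase_iff_on_stair, Ht.
Qed.

Lemma gamma_t_unique q1 q2 t :
  on_stair (mkV3 (q1 + t) (- q1 - q2 + t) (q2 + t)) -> gamma_t q1 q2 = t.
Proof.
  intros Ht. pose proof (gamma_on_stair q1 q2) as Hg.
  assert (gamma_t q1 q2 - t <= 0)
    by (apply (on_stair_antichain _ _ _ Ht Hg); unfold gamma; cbn [x1 x2 x3]; lra).
  assert (t - gamma_t q1 q2 <= 0)
    by (apply (on_stair_antichain _ _ _ Hg Ht); unfold gamma; cbn [x1 x2 x3]; lra).
  lra.
Qed.

Lemma gamma_t_lipschitz q1 q2 q1' q2' d : Rabs (q1 - q1') <= d -> Rabs (q2 - q2') <= d ->
  Rabs (gamma_t q1 q2 - gamma_t q1' q2') <= 2 * d.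
Proof.
  intros D1 D2.
  pose proof (Rle_abs (q1 - q1')). pose proof (Rle_abs (- (q1 - q1'))).
  pose proof (Rle_abs (q2 - q2')). pose proof (Rle_abs (- (q2 - q2'))).
  rewrite Rabs_Ropp in *.
  pose proof (gamma_on_stair q1 q2) as G. pose proof (gamma_on_stair q1' q2') as G'.
  assert (gamma_t q1 q2 - gamma_t q1' q2' - 2 * d <= 0)
    by (apply (on_stair_antichain _ _ _ G' G); unfold gamma; cbn [x1 x2 x3]; lra).
  assert (gamma_t q1' q2' - gamma_t q1 q2 - 2 * d <= 0)
    by (apply (on_stair_antichain _ _ _ G G'); unfold gamma; cbn [x1 x2 x3]; lra).
  apply Rabs_le. lra.
Qed.

Lemma gamma_t_add_IZR q1 q2 a b : gamma_t (q1 + IZR a) (q2 + IZR b) = gamma_t q1 q2.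
Proof.
  apply gamma_t_unique.
  apply (on_stair_translate (gamma q1 q2) _ a (- a - b) b);
    [lia | unfold gamma; cbn [x1 x2 x3]; push_IZR; ring .. | apply gamma_on_stair].
Qed.

Lemma gamma_near q1 q2 q1' q2' d : Rabs (q1' - q1) < d -> Rabs (q2' - q2) < d ->
  near3 (4 * d) (gamma q1' q2') (gamma q1 q2).
Proof.
  intros D1 D2.
  pose proof (gamma_t_lipschitz q1' q2' q1 q2 d (Rlt_le _ _ D1) (Rlt_le _ _ D2)) as T.
  pose proof (Rle_abs (gamma_t q1' q2' - gamma_t q1 q2)).
  pose proof (Rle_abs (- (gamma_t q1' q2' - gamma_t q1 q2))).
  rewrite Rabs_Ropp in *. apply Rabs_def2 in D1, D2.
  unfold near3, gamma; cbn [x1 x2 x3].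
  repeat split; apply Rabs_def1; lra.
Qed.

Lemma dist6_iotaR_lt q1 q2 q1' q2' e : dist6 (iotaR q1 q2) (iotaR q1' q2') < e ->
  Rabs (q1' - q1) < e /\ Rabs (q2' - q2) < e.
Proof.
  unfold dist6, iotaR; cbn [e1 e2 e3 e4 e5 e6].
  rewrite !Rmax_Rlt, (Rabs_minus_sym q1'), (Rabs_minus_sym q2').
  intros [[[H1 _] H3] _]. split; assumption.
Qed.

Definition ceil6 (g : V3 R) : V6 Z :=
  mkV6 (ceilZ (x1 g)) (ceilZ (x2 g)) (ceilZ (x3 g))
       (ceilZ (- x1 g)) (ceilZ (- x2 g)) (ceilZ (- x3 g)).

Lemma ceil6_le_near g g' : near3 (margin3 g) g' g -> leZ6 (ceil6 g) (ceil6 g').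
Proof.
  intros [N1 [N2 N3]]. destruct (margin3_le g) as [M1 [M2 M3]].
  destruct (ceilZ_Int_part_near (x1 g) (x1 g')); [lra|].
  destruct (ceilZ_Int_part_near (x2 g) (x2 g')); [lra|].
  destruct (ceilZ_Int_part_near (x3 g) (x3 g')); [lra|].
  unfold leZ6, ceil6; cbn [e1 e2 e3 e4 e5 e6]. rewrite !ceilZ_opp. lia.
Qed.

Lemma coord_face_ceilZ a fixed x : coord_face a fixed x ->
  ceilZ x = (if fixed then a else a + 1)%Z /\ ceilZ (- x) = (- a)%Z.
Proof.
  unfold coord_face. destruct fixed; intros Hx.
  - subst. rewrite <- opp_IZR, !ceilZ_IZR. auto.
  - split; apply ceilZ_unique; push_IZR; lra.
Qed.

Lemma ceil6_arr_face a f g g' : arr_face a f g -> arr_face a f g' -> ceil6 g = ceil6 g'.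
Proof.
  intros [F1 [F2 F3]] [G1 [G2 G3]]. unfold ceil6.
  destruct (coord_face_ceilZ _ _ _ F1) as [-> ->], (coord_face_ceilZ _ _ _ G1) as [-> ->],
    (coord_face_ceilZ _ _ _ F2) as [-> ->], (coord_face_ceilZ _ _ _ G2) as [-> ->],
    (coord_face_ceilZ _ _ _ F3) as [-> ->], (coord_face_ceilZ _ _ _ G3) as [-> ->].
  reflexivity.
Qed.

Lemma iotaR_add_iotaZ q1 q2 a b :
  addR6 (iotaR q1 q2) (realZ6 (iotaZ a b)) = iotaR (q1 + IZR a) (q2 + IZR b).
Proof. unfold addR6, iotaR, realZ6, iotaZ; cbn [e1 e2 e3 e4 e5 e6]. f_equal; push_IZR; ring. Qed.

Lemma ceil6_gamma_add_IZR q1 q2 a b :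
  ceil6 (gamma (q1 + IZR a) (q2 + IZR b)) = addZ6 (ceil6 (gamma q1 q2)) (iotaZ a b).
Proof.
  unfold ceil6, gamma, addZ6, iotaZ; cbn [x1 x2 x3 e1 e2 e3 e4 e5 e6].
  rewrite gamma_t_add_IZR.
  f_equal; rewrite <- ceilZ_add_IZR; f_equal; push_IZR; ring.
Qed.

Section Stratification.

Variable psi : V6 R -> V6 Z.
Hypothesis psi_iotaR : forall q1 q2, psi (iotaR q1 q2) = ceil6 (gamma q1 q2).

Lemma psi_continuous U : up_closed U -> open_in_LR (fun p => U (psi p)).
Proof.
  intros HU p Up [q1 [q2 ->]].
  set (m := margin3 (gamma q1 q2)).
  exists (m / 4). split; [pose proof (margin3_pos (gamma q1 q2)); unfold m; lra|].
  intros p' [q1' [q2' ->]] Hdist.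
  destruct (dist6_iotaR_lt _ _ _ _ _ Hdist) as [D1 D2].
  apply (HU _ _ Up). rewrite !psi_iotaR.
  apply ceil6_le_near. fold m. replace m with (4 * (m / 4)) by field.
  apply gamma_near; assumption.
Qed.

Lemma psi_constant_on_cells a f p p' :
  LR_open_cell a f p -> LR_open_cell a f p' -> psi p = psi p'.
Proof.
  intros [q1 [q2 [-> [_ F]]]] [q1' [q2' [-> [_ F']]]].
  rewrite !psi_iotaR. exact (ceil6_arr_face a f _ _ F F').
Qed.

Lemma psi_equivariant p v : inLR p -> inL v -> psi (addR6 p (realZ6 v)) = addZ6 (psi p) v.
Proof.
  intros [q1 [q2 ->]] [a [b ->]].
  rewrite iotaR_add_iotaZ, !psi_iotaR. apply ceil6_gamma_add_IZR.
Qed.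

End Stratification.

Theorem lemma5p8 (psi : V6 R -> V6 Z) :
  (forall q1 q2 : R,
     let g := gamma q1 q2 in
     psi (iotaR q1 q2) =
       mkV6 (ceilZ (x1 g)) (ceilZ (x2 g)) (ceilZ (x3 g))
            (ceilZ (- x1 g)) (ceilZ (- x2 g)) (ceilZ (- x3 g))) ->
  compatible_stratification psi.
Proof.
  intros psi_iotaR.
  split; [|split].
  - exact (psi_continuous psi psi_iotaR).
  - exact (psi_constant_on_cells psi psi_iotaR).
  - exact (psi_equivariant psi psi_iotaR).
Qed.
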